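(* For every finite simple graph $G$ and every positive integer $n$, $$\chi_i(G)\le \chi_i(S_G^n)\le \chi_i(G)+1.$$ Moreover, both bounds are attained: there exist graphs $G$ (e.g. $G=K_p$ with $p\ge 3$, or $G=C_k$ with $k\ge 3$, $k\not\equiv 0\pmod 4$) with $\chi_i(S_G^n)=\chi_i(G)$ for all $n\ge 1$, and there exist graphs $G$ (e.g. $G=C_k$ with $k\equiv 0\pmod 4$) with $\chi_i(S_G^n)=\chi_i(G)+1$ for all $n\ge 2$.
   Context: For a graph $H$, an injective $k$-coloring is a map $f:V(H)\to\{1,\dots,k\}$ such that any two distinct vertices $u,w$ with $f(u)=f(w)$ have no common neighbor; $\chi_i(H)$ is the least such $k$. For a graph $G$ and positive integer $n$, the generalized Sierpiński graph $S_G^n$ has vertex set $V(G)^n$, and $(u_1,\dots,u_n)$, $(v_1,\dots,v_n)$ are adjacent if and only if there is $d\in\{1,\dots,n\}$ with $u_i=v_i$ for $i<d$, $u_dv_d\in E(G)$, and $u_i=v_d$, $v_i=u_d$ for all $i>d$. $K_p$ is the complete graph on $p$ vertices and $C_k$ the cycle on $k$ vertices. *)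

From mathcomp Require Import all_boot.
Set Implicit Arguments. Unset Strict Implicit. Unset Printing Implicit Defensive.

(* A graph on a finite vertex type T is given by an adjacency relation e;
   a finite simple graph is one with e symmetric and irreflexive. *)

Definition inj_col (T : finType) (e : rel T) (k : nat) (f : T -> 'I_k) : bool :=
  [forall u, forall w,
     ((u != w) && (f u == f w)) ==> ~~ [exists x, e u x && e w x]].

Definition has_inj_col (T : finType) (e : rel T) (k : nat) : bool :=
  [exists f : {ffun T -> 'I_k}, inj_col e f].

Lemma has_inj_col_ex (T : finType) (e : rel T) : exists k, has_inj_col e k.
Proof.
exists #|T|; apply/existsP; exists (finfun (@enum_rank T)).
apply/forallP => u; apply/forallP => w; apply/implyP => /andP [ne eq].
rewrite !ffunE in eq.
by move: ne; rewrite (enum_rank_inj (eqP eq)) eqxx.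
Qed.

Definition chi_i (T : finType) (e : rel T) : nat := ex_minn (has_inj_col_ex e).

Definition sierp (T : finType) (e : rel T) (n : nat) : rel {ffun 'I_n -> T} :=
  fun u v => [exists d : 'I_n,
    [&& [forall i : 'I_n, (i < d) ==> (u i == v i)],
        e (u d) (v d) &
        [forall i : 'I_n, (d < i) ==> ((u i == v d) && (v i == u d))]]].

Definition complete_g (p : nat) : rel 'I_p := fun i j => i != j.

Definition cycle_g (k : nat) : rel 'I_k :=
  fun i j => (val j == (val i).+1 %% k) || (val i == (val j).+1 %% k).
Arguments sierp {T} e n.
Arguments complete_g p : clear implicits.
Arguments cycle_g k : clear implicits.

(* Every vertex of S_G^n has at most one external neighbour, all its other
   neighbours differing from it only in the last coordinate.  Hence colouring
   (.., a, b) by an optimal injective colouring of G at b, with one fresh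
   colour when a = b, is injective, while G embeds into S_G^n as the vertices
   with a constant prefix.  For K_p a weighted sum of the coordinates modulo p
   is an injective p-colouring of S_G^n.  For C_k with 4 not dividing k,
   colouring by the difference of the last two coordinates needs three
   colours, as does C_k itself; when 4 divides k, C_k needs two colours but
   S_G^n has vertices of degree three. *)

From mathcomp Require Import all_boot zify.
Set Implicit Arguments. Unset Strict Implicit. Unset Printing Implicit Defensive.

Section InjectiveColouring.
Variables (T : finType) (e : rel T).

Lemma inj_colP k (f : T -> 'I_k) :
  reflect (forall u w x, u != w -> e u x -> e w x -> f u != f w) (inj_col e f).
Proof.
apply: (iffP idP) => [f_col u w x uw ux wx | f_nbr].
  apply/negP => fuw; have := implyP (forallP (forallP f_col u) w).
  by rewrite uw fuw => /(_ isT) /existsPn /(_ x); rewrite ux wx.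
apply/forallP => u; apply/forallP => w; apply/implyP => /andP [uw fuw].
by apply/existsPn => x; apply/negP => /andP [ux wx]; move: (f_nbr u w x uw ux wx); rewrite fuw.
Qed.

Lemma chi_i_le k (f : T -> 'I_k) : inj_col e f -> chi_i e <= k.
Proof.
move=> f_col; rewrite /chi_i; case: ex_minnP => k0 _; apply.
apply/existsP; exists (finfun f); apply/forallP => u; apply/forallP => w.
by rewrite !ffunE; exact: (forallP (forallP f_col u) w).
Qed.

Lemma inj_col_chi_i : exists f : T -> 'I_(chi_i e), inj_col e f.
Proof.
by rewrite /chi_i; case: ex_minnP => k /existsP [f f_col] _; exists f.
Qed.

Lemma size_le_chi_i (s : seq T) : uniq s ->
  {in s &, forall u w, u != w -> exists x, e u x && e w x} -> size s <= chi_i e.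
Proof.
move=> s_uniq common; have [f /inj_colP f_nbr] := inj_col_chi_i.
have /card_uniqP : uniq (map f s).
  rewrite map_inj_in_uniq // => u w us ws fuw; apply/eqP; apply: contraT => uw.
  have [x /andP [ux wx]] := common u w us ws uw.
  by have := f_nbr u w x uw ux wx; rewrite fuw eqxx.
by rewrite size_map => <-; apply: leq_trans (max_card _) _; rewrite card_ord.
Qed.

End InjectiveColouring.

Lemma chi_i_embed (T T' : finType) (e : rel T) (e' : rel T') (phi : T -> T') :
  injective phi -> {homo phi : x y / e x y >-> e' x y} -> chi_i e <= chi_i e'.
Proof.
move=> phi_inj phi_hom; have [g /inj_colP g_nbr] := inj_col_chi_i e'.
apply: (@chi_i_le _ _ _ (g \o phi)); apply/inj_colP => u w x uw ux wx.
by apply: g_nbr (phi_hom _ _ ux) (phi_hom _ _ wx); apply: contra uw => /eqP /phi_inj ->.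
Qed.

Section Sierpinski.
Variables (T : finType) (e : rel T) (m : nat).
Notation V := {ffun 'I_m.+1 -> T}.
Notation L := (@ord_max m).

Definition internal (u z : V) :=
  (forall i : 'I_m.+1, i != L -> u i = z i) /\ e (u L) (z L).

Definition external (u z : V) (d : 'I_m.+1) :=
  [/\ d < m, (forall i : 'I_m.+1, i < d -> u i = z i), e (u d) (z d) &
      (forall i : 'I_m.+1, d < i -> u i = z d /\ z i = u d)].

Lemma sierp_edgeP u z : sierp e m.+1 u z -> internal u z \/ exists d, external u z d.
Proof.
case/existsP => d /and3P [/forallP prefix ed /forallP suffix].
have [dm | md] := ltnP d m.
  right; exists d; split=> // i id; first exact/eqP/(implyP (prefix i)).
  by have /andP [/eqP -> /eqP ->] := implyP (suffix i) id.
have dL : d = L by apply/val_inj => /=; have := ltn_ord d; lia.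
subst d; left; split=> // i iL; apply/eqP/(implyP (prefix i)).
by move: iL; rewrite -val_eqE /=; have := ltn_ord i; lia.
Qed.

Lemma internal_sierp u z : internal u z -> sierp e m.+1 u z.
Proof.
case=> same eL; apply/existsP; exists L; rewrite eL /=.
apply/andP; split; apply/forallP => i; apply/implyP => iL.
  by rewrite same // neq_ltn iL.
by have := ltn_ord i; rewrite /= in iL; lia.
Qed.

Lemma internal_neq (u v z : V) : u != v -> internal u z -> internal v z ->
  (forall i : 'I_m.+1, i != L -> u i = v i) /\ u L != v L.
Proof.
move=> uv [uz _] [vz _]; split=> [i iL|]; first by rewrite uz // vz.
apply: contra uv => /eqP uvL; apply/eqP/ffunP => i.
by have [-> // | iL] := eqVneq i L; rewrite uz // vz.
Qed.

Hypothesis e_irr : irreflexive e.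

(* External neighbours of z at d1 < d2 cannot coexist: the first makes z
   constant after d1, the second needs an edge between z_d2 and z_(d2+1). *)
Lemma external_unique u v z d d' : external u z d -> external v z d' -> u = v.
Proof.
have no_lt u' v' d1 d2 : external u' z d1 -> external v' z d2 -> d1 < d2 -> False.
  move=> [_ _ _ u'z] [d2m _ v'z2 v'z] lt12.
  have d2S : d2.+1 < m.+1 by lia.
  have [_ zS] := u'z (Ordinal d2S) (ltn_trans lt12 (ltnSn _)).
  have [_ zS'] := v'z (Ordinal d2S) (ltnSn _).
  by move: v'z2; rewrite -zS' zS -(proj2 (u'z d2 lt12)) e_irr.
move=> uz vz; have dd' : d = d'.
  apply/val_inj; case: (ltngtP d d') => // lt.
    by case: (no_lt _ _ _ _ uz vz lt).
  by case: (no_lt _ _ _ _ vz uz lt).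
subst d'; case: uz => [dm u_pre _ u_suf]; case: vz => [_ v_pre _ v_suf].
apply/ffunP => i; case: (ltngtP i d) => id.
- by rewrite u_pre // v_pre.
- by rewrite (proj1 (u_suf i id)) (proj1 (v_suf i id)).
- have dS : d.+1 < m.+1 by lia.
  rewrite (_ : i = d); last exact: val_inj.
  by rewrite -(proj2 (u_suf (Ordinal dS) (ltnSn _))) (proj2 (v_suf (Ordinal dS) (ltnSn _))).
Qed.

Lemma inj_col_sierp K (c : V -> 'I_K) :
  (forall z u v, u != v -> internal u z -> internal v z -> c u != c v) ->
  (forall z u v d, external u z d -> internal v z -> c u != c v) ->
  inj_col (sierp e m.+1) c.
Proof.
move=> int_int ext_int; apply/inj_colP => u w x uw ux wx.
case: (sierp_edgeP ux) => [iu | [d eu]]; case: (sierp_edgeP wx) => [iw | [d' ew]].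
- exact: int_int iu iw.
- by rewrite eq_sym; apply: ext_int ew iu.
- exact: ext_int eu iw.
- by move: uw; rewrite (external_unique eu ew) eqxx.
Qed.

End Sierpinski.

Lemma chi_i_sierp_ge (T : finType) (e : rel T) m : chi_i e <= chi_i (sierp e m.+1).
Proof.
case: (pickP (@predT T)) => [c0 _ | T_empty].
  pose phi x : {ffun 'I_m.+1 -> T} := [ffun i => if i == ord_max then x else c0].
  apply: (@chi_i_embed _ _ e (sierp e m.+1) phi).
    by move=> x y /(congr1 (fun g : {ffun _ -> T} => g ord_max)); rewrite !ffunE eqxx.
  move=> x y xy; apply: internal_sierp; split; last by rewrite !ffunE eqxx.
  by move=> i /negbTE iL; rewrite !ffunE iL.
have f : T -> 'I_0 by move=> x; move: (T_empty x).
apply: leq_trans (chi_i_le (f := f) _) _ => //.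
by apply/inj_colP => u; move: (T_empty u).
Qed.

Lemma chi_i_sierp1 (T : finType) (e : rel T) : chi_i (sierp e 1) = chi_i e.
Proof.
apply/eqP; rewrite eqn_leq chi_i_sierp_ge andbT.
apply: (@chi_i_embed _ _ (sierp e 1) e (fun u => u ord0)).
  by move=> u v uv; apply/ffunP => i; rewrite (ord1 i) uv.
by move=> u v /existsP [d /and3P [_ + _]]; rewrite (ord1 d).
Qed.

Section LastTwoCoordinates.
Variables (T : finType) (e : rel T).
Hypotheses (e_sym : symmetric e) (e_irr : irreflexive e).
Variables (m K : nat) (c : T -> T -> 'I_K).
Hypothesis c_col : forall a, inj_col e (c a).
Hypothesis c_shift : forall x y w, e x y -> e y w -> c y x != c x w.
Hypothesis c_diag : forall x y w, e x y -> e y w -> c x x != c y w.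

(* The internal neighbours (.., x, w) of z = (.., x, y) share its penultimate
   coordinate, while its external neighbour ends with (y, x) if it branches
   at the penultimate position and with (x, x) otherwise. *)
Lemma inj_col_sierp_last2 :
  inj_col (sierp e m.+2) (fun u => c (u (inord m)) (u ord_max)).
Proof.
have PL : (inord m : 'I_m.+2) != ord_max by rewrite -val_eqE /= inordK // ltn_eqF.
apply: inj_col_sierp => // [z u v uv uz vz | z u v d [dm _ ud u_suf] [v_pre vz]].
  have [same uvL] := internal_neq uv uz vz.
  have /inj_colP ca_nbr := c_col (v (inord m)).
  by rewrite same //; apply: ca_nbr uvL uz.2 vz.2.
rewrite v_pre //; have [-> zL] := u_suf ord_max dm; rewrite zL in vz.
rewrite e_sym in ud; rewrite e_sym in vz.
have [dP | Pd] := ltnP d m.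
  have [-> ->] : u (inord m) = z d /\ z (inord m) = u d by apply: u_suf; rewrite inordK.
  exact: c_diag ud vz.
have -> : inord m = d by apply/val_inj; rewrite /= inordK //; lia.
exact: c_shift ud vz.
Qed.

End LastTwoCoordinates.

Lemma chi_i_sierp_le (T : finType) (e : rel T) : symmetric e -> irreflexive e ->
  forall n, 0 < n -> chi_i (sierp e n) <= (chi_i e).+1.
Proof.
move=> e_sym e_irr [|[|m]] // _; first by rewrite chi_i_sierp1.
have [f /inj_colP f_nbr] := inj_col_chi_i e.
pose old x : 'I_(chi_i e).+1 := widen_ord (leqnSn _) (f x).
have old_new x : old x != ord_max by rewrite -val_eqE /= neq_ltn ltn_ord.
have oldE x y : (old x == old y) = (f x == f y) by rewrite -!val_eqE.
pose c a b := if a == b then ord_max else old b.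
have neq_c a b : e a b -> c a b = old b.
  by move=> ab; rewrite /c ifF //; apply: contraTF ab => /eqP ->; rewrite e_irr.
apply: chi_i_le (@inj_col_sierp_last2 T e e_sym e_irr m _ c _ _ _).
- move=> a; apply/inj_colP => b b' t bb' bt b't; rewrite /c.
  have [->|ab] := eqVneq a b; first by rewrite (negbTE bb') eq_sym old_new.
  have [_|ab'] := eqVneq a b'; first by rewrite old_new.
  by rewrite oldE; apply: f_nbr bt b't.
- move=> x y w xy yw; rewrite (neq_c y x) /c; last by rewrite e_sym.
  have [_|xw] := eqVneq x w; first by rewrite old_new.
  by rewrite oldE; apply: (f_nbr _ _ y) => //; rewrite e_sym.
- by move=> x y w _ yw; rewrite (neq_c y w) // /c eqxx eq_sym old_new.
Qed.

Lemma sum_ord_split n (F : 'I_n -> nat) (d : 'I_n) :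
  \sum_(i < n) F i = \sum_(i < n | i < d) F i + F d + \sum_(i < n | d < i) F i.
Proof.
rewrite (bigD1 d) //= (bigID (fun i : 'I_n => i < d)) /= addnA [F d + _]addnC.
by congr (_ + _ + _); apply: eq_bigl => i; rewrite -val_eqE /=; case: ltngtP.
Qed.

Section WeightedSum.
Variables (T : finType) (e : rel T) (m : nat).
Hypothesis T_pos : 0 < #|T|.
Notation V := {ffun 'I_m.+1 -> T}.
Notation L := (@ord_max m).

(* The weights 2^(m-1), ..., 2, 1, 1: each weight but the last equals the sum
   of all later ones. *)
Definition weight (i : nat) := if i < m then 2 ^ (m.-1 - i) else 1.

Lemma sum_weight_tail (d : 'I_m.+1) : d < m -> \sum_(i < m.+1 | d < i) weight i = weight d.
Proof.
have tail j d' : d' + j.+1 = m -> \sum_(d'.+1 <= i < m.+1) weight i = weight d'.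
  elim: j d' => [|j IH] d' d'm.
    rewrite (_ : d'.+1 = m) ?big_nat1 /weight ?ltnn ?ifT; try lia.
    by rewrite (_ : m.-1 - d' = 0); lia.
  rewrite big_ltn ?IH /weight ?ifT; try lia.
  by rewrite (_ : m.-1 - d' = (m.-1 - d'.+1).+1) ?expnS ?mul2n ?addnn; lia.
move=> dm; rewrite -(tail (m - d.+1)); last by lia.
by rewrite big_geq_mkord; apply: eq_bigl.
Qed.

Definition wsum (u : V) := \sum_(i < m.+1) weight i * enum_rank (u i).
Definition wcol (u : V) : 'I_#|T| := Ordinal (ltn_pmod (wsum u) T_pos).

Lemma wsum_last u :
  wsum u = \sum_(i < m.+1 | i < L) weight i * enum_rank (u i) + enum_rank (u L).
Proof.
rewrite /wsum (sum_ord_split _ L) [X in _ + X]big_pred0 => [|i]; last first.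
  by rewrite ltnNge -ltnS ltn_ord.
by rewrite /weight ltnn mul1n addn0.
Qed.

Lemma wcol_last (u v : V) :
  (forall i, i != L -> u i = v i) -> u L != v L -> wcol u != wcol v.
Proof.
move=> same uvL; rewrite -val_eqE /= !wsum_last.
rewrite (eq_bigr (fun i : 'I_m.+1 => weight i * enum_rank (v i))) => [|i iL]; last first.
  by rewrite same // neq_ltn iL.
by rewrite eqn_modDl !modn_small // val_eqE (inj_eq enum_rank_inj).
Qed.

Lemma wsum_external u z d : external e u z d -> wsum u = wsum z.
Proof.
case=> dm pre _ suf; rewrite /wsum !(sum_ord_split _ d).
have -> : \sum_(i < m.+1 | i < d) weight i * enum_rank (u i) =
          \sum_(i < m.+1 | i < d) weight i * enum_rank (z i).
  by apply: eq_bigr => i id; rewrite pre.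
have -> : \sum_(i < m.+1 | d < i) weight i * enum_rank (u i) =
          \sum_(i < m.+1 | d < i) weight i * enum_rank (z d).
  by apply: eq_bigr => i id; rewrite (proj1 (suf i id)).
have -> : \sum_(i < m.+1 | d < i) weight i * enum_rank (z i) =
          \sum_(i < m.+1 | d < i) weight i * enum_rank (u d).
  by apply: eq_bigr => i id; rewrite (proj2 (suf i id)).
by rewrite -!big_distrl /= sum_weight_tail // addnAC -addnA [X in _ + X]addnC addnA.
Qed.

(* External neighbours of z have the weighted sum of z, since the values at d
   and in the tail trade places and the tail weighs as much as position d;
   internal ones differ from z only in the last coordinate, of weight 1. *)
Lemma inj_col_sierp_wcol : irreflexive e -> inj_col (sierp e m.+1) wcol.
Proof.
move=> e_irr; apply: inj_col_sierp => // [z u v uv uz vz | z u v d uz [vz vzL]].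
  by have [same uvL] := internal_neq uv uz vz; exact: wcol_last.
have -> : wcol u = wcol z by apply/val_inj; rewrite /= (wsum_external uz).
rewrite eq_sym; apply: wcol_last => [i iL|]; first by rewrite vz.
by apply: contraTneq vzL => ->; rewrite e_irr.
Qed.

End WeightedSum.

Lemma chi_i_sierp_le_card (T : finType) (e : rel T) m :
  irreflexive e -> 0 < #|T| -> chi_i (sierp e m.+1) <= #|T|.
Proof. by move=> e_irr T_pos; apply: chi_i_le (@inj_col_sierp_wcol T e m T_pos e_irr). Qed.

Lemma chi_i_complete_ge p : 3 <= p -> p <= chi_i (complete_g p).
Proof.
move=> p3; rewrite -{1}(size_enum_ord p); apply: size_le_chi_i (enum_uniq _) _.
move=> u w _ _; rewrite -val_eqE /= => uw.
pose t := if (u != 0 :> nat) && (w != 0 :> nat) then 0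
          else if (u != 1 :> nat) && (w != 1 :> nat) then 1 else 2.
have tp : t < p by rewrite /t; repeat case: ifP; lia.
exists (Ordinal tp); rewrite /complete_g -!val_eqE /= /t.
by move: uw; repeat case: ifP; lia.
Qed.

(* The vertex z = (a, .., a, b) has the internal neighbours (a, .., a, t) for
   t ~ b and the external neighbour (a, .., a, b, a). *)
Lemma chi_i_sierp_gt_deg (T : finType) (e : rel T) m a b :
  irreflexive e -> e b a -> #|[set t | e t b]| < chi_i (sierp e m.+2).
Proof.
move=> e_irr ba.
have PL : (inord m : 'I_m.+2) != ord_max by rewrite -val_eqE /= inordK // ltn_eqF.
pose pad t : {ffun 'I_m.+2 -> T} := [ffun i => if i == ord_max then t else a].
pose ext : {ffun 'I_m.+2 -> T} :=
  [ffun i => if i == ord_max then a else if i == inord m then b else a].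
have pad_inj : injective pad.
  by move=> t t' /(congr1 (fun g : {ffun _ -> T} => g ord_max)); rewrite !ffunE eqxx.
have ext_pad t : ext != pad t.
  apply/eqP => /(congr1 (fun g : {ffun _ -> T} => g (inord m))).
  by rewrite !ffunE (negbTE PL) eqxx => ab; move: ba; rewrite ab e_irr.
have pad_z t : e t b -> sierp e m.+2 (pad t) (pad b).
  move=> tb; apply: internal_sierp; split; last by rewrite !ffunE eqxx.
  by move=> i /negbTE iL; rewrite !ffunE iL.
have ext_z : sierp e m.+2 ext (pad b).
  apply/existsP; exists (inord m); rewrite !ffunE (negbTE PL) eqxx ba /=.
  apply/andP; split; apply/forallP => i; apply/implyP; rewrite inordK // => iP.
    have [iL iP'] : i != ord_max /\ i != inord m.
      by rewrite -!val_eqE /= inordK //; split; lia.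
    by rewrite !ffunE (negbTE iL) (negbTE iP').
  have -> : i = ord_max by apply/val_inj => /=; have := ltn_ord i; lia.
  by rewrite !ffunE !eqxx.
have := @size_le_chi_i _ (sierp e m.+2) (ext :: map pad (enum [set t | e t b])).
rewrite /= size_map -cardE; apply.
  rewrite map_inj_uniq // enum_uniq andbT.
  by apply/mapP => -[t _ /eqP]; rewrite (negbTE (ext_pad t)).
move=> u w us ws _; exists (pad b).
suff adj v : v \in ext :: map pad (enum [set t | e t b]) -> sierp e m.+2 v (pad b).
  by rewrite !adj.
rewrite inE => /orP [/eqP -> // | /mapP [t]].
by rewrite mem_enum inE => tb ->; exact: pad_z.
Qed.

Lemma modn_2k k a : a < k + k -> a %% k = if a < k then a else a - k.
Proof.
move=> ak; case: ifP => ak'; first by rewrite modn_small.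
by rewrite -(subnK (_ : k <= a)) ?modnDr ?modn_small //; lia.
Qed.

Section Cycle.
Variable k : nat.
Hypothesis k3 : 3 <= k.
Notation e := (cycle_g k).

Lemma cycle_sym : symmetric e.
Proof. by move=> i j; rewrite /cycle_g orbC. Qed.

Lemma cycle_adj (x y : 'I_k) : e x y ->
  (x.+1 < k /\ y = x.+1 :> nat) \/ (x.+1 = k /\ y = 0 :> nat) \/
  (y.+1 < k /\ x = y.+1 :> nat) \/ (y.+1 = k /\ x = 0 :> nat).
Proof.
have succ_mod a : a < k -> a.+1 %% k = if a.+1 < k then a.+1 else 0.
  move=> ak; case: ifP => ak1; first by rewrite modn_small.
  by rewrite (_ : a.+1 = k) ?modnn //; lia.
have := ltn_ord x; have := ltn_ord y => yk xk.
by case/orP => /eqP /=; rewrite succ_mod //; case: ifP; lia.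
Qed.

Lemma cycle_irr : irreflexive e.
Proof. by move=> x; apply/negP => /cycle_adj; lia. Qed.

Definition ordk (a : nat) : 'I_k := Ordinal (ltn_pmod a (ltnW (ltnW k3))).

Lemma cycle_common_nbr (u w x : 'I_k) : u != w -> e u x -> e w x ->
  w = ordk (u + 2) \/ u = ordk (w + 2).
Proof.
rewrite -val_eqE /= => uw /cycle_adj ux /cycle_adj wx.
have := ltn_ord u; have := ltn_ord w; have := ltn_ord x => xk wk uk.
suff [h|h] : w = (u + 2) %% k :> nat \/ u = (w + 2) %% k :> nat.
- by left; apply/val_inj.
- by right; apply/val_inj.
by rewrite !modn_2k; try lia; case: ifP; case: ifP; lia.
Qed.

Lemma inj_col_cycleP K (f : 'I_k -> 'I_K) :
  reflect (forall a, f (ordk a) != f (ordk (a + 2))) (inj_col e f).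
Proof.
apply: (iffP (inj_colP _ _)) => [f_nbr a | f_step u w x uw ux wx].
  apply: (f_nbr _ _ (ordk (a + 1))).
  - by rewrite -val_eqE /= -[a in a %% k]addn0 eqn_modDl mod0n modn_small //; lia.
  - by rewrite /cycle_g /= -[(a %% k).+1]addn1 modnDml eqxx.
  - by rewrite /cycle_g /= -[((a + 1) %% k).+1]addn1 modnDml -addnA eqxx orbT.
have ordkK (v : 'I_k) : ordk v = v by apply/val_inj; rewrite /= modn_small.
case: (cycle_common_nbr uw ux wx) => [->|->]; first by rewrite -{1}(ordkK u).
by rewrite eq_sym -{1}(ordkK w).
Qed.

Lemma chi_i_cycle_ge2 : 2 <= chi_i e.
Proof.
have [f /inj_col_cycleP /(_ 0)] := inj_col_chi_i e; rewrite -val_eqE /=.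
by have := ltn_ord (f (ordk 0)); have := ltn_ord (f (ordk (0 + 2))); lia.
Qed.

Lemma chi_i_cycle_le2 : k %% 4 = 0 -> chi_i e <= 2.
Proof.
move=> k4; have d4 : 4 %| k by rewrite /dvdn k4.
have lt2 x : x %% 4 %/ 2 < 2 by lia.
apply: (@chi_i_le _ _ _ (fun i : 'I_k => Ordinal (lt2 i))); apply/inj_col_cycleP => a.
by rewrite -val_eqE /= !(modn_dvdm _ d4); lia.
Qed.

(* Two colours would have to alternate along a, a + 2, a + 4, ...; when
   4 does not divide k this walk returns to its start after an odd number
   of steps. *)
Lemma chi_i_cycle_ge3 : k %% 4 != 0 -> 3 <= chi_i e.
Proof.
move=> k4; rewrite leqNgt; apply/negP => K2.
have [f /inj_col_cycleP f_step] := inj_col_chi_i e.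
pose v t := nat_of_ord (f (ordk (2 * t))).
have v_le1 t : v t <= 1 by have := ltn_ord (f (ordk (2 * t))); rewrite /v; lia.
have vS t : v t.+1 = 1 - v t.
  have := f_step (2 * t); rewrite -val_eqE /= (_ : 2 * t + 2 = 2 * t.+1); last by lia.
  by rewrite -/(v t) -/(v t.+1); have := v_le1 t; have := v_le1 t.+1; lia.
have vE t : v t = if odd t then 1 - v 0 else v 0.
  by elim: t => [|t IH] //=; rewrite vS IH; case: (odd t) => /=; have := v_le1 0; lia.
have [N [N0 oN]] : exists N, (2 * N) %% k = 0 /\ odd N.
  have [ok | ek] := boolP (odd k); first by exists k; rewrite modnMl.
  have hk := odd_double_half k; rewrite (negbTE ek) add0n -muln2 in hk.
  exists k./2; split; first by rewrite mulnC hk modnn.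
  apply: contraT => eh; have hh := odd_double_half k./2.
  by rewrite (negbTE eh) add0n -muln2 in hh; move: k4; rewrite -hk -hh; lia.
have : v N = v 0 by rewrite /v; congr (nat_of_ord (f _)); apply/val_inj; rewrite /= N0 muln0 mod0n.
by rewrite vE oN; have := v_le1 0; lia.
Qed.

Lemma chi_i_sierp_cycle_ge3 m : 3 <= chi_i (sierp e m.+2).
Proof.
have [s0 s1 s2] : [/\ 0 %% k = 0, 1 %% k = 1 & 2 %% k = 2].
  by split; rewrite modn_small //; lia.
have e10 : e (ordk 1) (ordk 0) by rewrite /cycle_g /= s0 s1 eqxx orbT.
apply: leq_trans (chi_i_sierp_gt_deg m cycle_irr e10).
have sub : [set ordk 0; ordk 2] \subset [set t | e t (ordk 1)].
  apply/subsetP => t; rewrite !inE => /orP [] /eqP ->;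
    by rewrite /cycle_g /= ?s0 ?s1 ?s2 ?eqxx ?orbT.
by rewrite ltnS; apply: leq_trans (subset_leq_card sub); rewrite cards2 -val_eqE /= s0 s2.
Qed.

End Cycle.

Section DifferenceColouring.
Variables (k K : nat) (h : nat -> nat).
Hypothesis k3 : 3 <= k.
Hypothesis h_lt : forall t, h t < K.
Hypothesis h_step : forall t, t < k -> h t != h ((t + 2) %% k).
Hypotheses (h01 : h 0 != h 1) (h0k1 : h 0 != h (k - 1)).
Hypotheses (h1k2 : h 1 != h (k - 2)) (hk12 : h (k - 1) != h 2).
Notation e := (cycle_g k).

(* For x ~ y ~ w the differences y -> x and x -> w lie in {1, k - 1} and
   {0, 2, k - 2}; this is where the conditions on h at the ends come from. *)
Definition cdiff (a b : 'I_k) := (b + k - a) %% k.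
Definition cdiff_col (a b : 'I_k) : 'I_K := Ordinal (h_lt (cdiff a b)).

Lemma cdiff_lt a b : cdiff a b < k.
Proof. exact: ltn_pmod (ltnW (ltnW k3)). Qed.

Lemma cdiff_refl x : cdiff x x = 0.
Proof. by rewrite /cdiff addKn modnn. Qed.

Lemma cdiff_add x y w : cdiff x w = (cdiff x y + cdiff y w) %% k.
Proof.
have := ltn_ord x; have := ltn_ord y => yk xk.
rewrite /cdiff modnDml modnDmr.
by rewrite (_ : y + k - x + (w + k - y) = w + k - x + k) ?modnDr //; lia.
Qed.

Lemma cdiff_step a t : cdiff a (ordk k3 (t + 2)) = (cdiff a (ordk k3 t) + 2) %% k.
Proof.
rewrite (cdiff_add _ (ordk k3 t)) [cdiff (ordk _ t) _](_ : _ = 2) //.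
have := ltn_pmod t (ltnW (ltnW k3)); rewrite /cdiff /= -modnDml.
move: (t %% k) => x xk; rewrite (@modn_2k _ (x + 2)); last by lia.
case: ifP => x2k.
  by rewrite (_ : x + 2 + k - x = 2 + k) ?modnDr ?modn_small //; lia.
by rewrite (_ : x + 2 - k + k - x = 2) ?modn_small //; lia.
Qed.

Lemma cdiff_adj x y : e x y ->
  (cdiff y x = k - 1 /\ cdiff x y = 1) \/ (cdiff y x = 1 /\ cdiff x y = k - 1).
Proof.
have := ltn_ord x; have := ltn_ord y => yk xk.
by move/(cycle_adj k3); rewrite /cdiff !modn_2k; try lia; case: ifP; case: ifP; lia.
Qed.

Lemma inj_col_sierp_cdiff m :
  inj_col (sierp e m.+2) (fun u => cdiff_col (u (inord m)) (u ord_max)).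
Proof.
apply: (@inj_col_sierp_last2 _ e (@cycle_sym k) (cycle_irr k3) m K cdiff_col) => [a | x y w | x y w].
- apply/(inj_col_cycleP k3) => t; rewrite -val_eqE /= cdiff_step; exact: h_step (cdiff_lt _ _).
- move=> /cdiff_adj xy /cdiff_adj yw; rewrite -val_eqE /= (cdiff_add x y w).
  case: xy => [[-> ->]|[-> ->]]; case: yw => [[_ ->]|[_ ->]].
  + by rewrite addn1 modn_small.
  + by rewrite subnKC ?modnn 1?eq_sym //; lia.
  + by rewrite subnK ?modnn 1?eq_sym //; lia.
  + by rewrite (_ : k - 1 + (k - 1) = k - 2 + k) ?modnDr ?modn_small //; lia.
- by move=> _ /cdiff_adj yw; rewrite -val_eqE /= cdiff_refl; case: yw => [[_ ->]|[_ ->]].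
Qed.

End DifferenceColouring.

(* Colours 1, 1, 2, 2 repeat along t = 1, 2, 3, 4, ...; the exceptions near
   t = k repair the wrap-around so that t and t + 2 (mod k) always differ and
   the last two differences k - 2, k - 1 get colour 2. *)
Definition diff_colour (k t : nat) : nat :=
  if t == 0 then 0 else
  if (k %% 4 == 2) && (t + 3 == k) then 0 else
  if (k %% 4 == 2) && (t + 1 == k) then 2 else
  if (k %% 4 == 3) && ((t + 3 == k) || (t + 4 == k)) then 0 else
  if (k %% 4 == 3) && ((t + 1 == k) || (t + 2 == k)) then 2 else
  if (t %% 4 == 1) || (t %% 4 == 2) then 1 else 2.

Lemma diff_colour_lt3 k t : diff_colour k t < 3.
Proof. by rewrite /diff_colour; repeat case: ifP. Qed.

Section DiffColourTable.
Variable k : nat.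
Hypotheses (k5 : 5 <= k) (k4 : k %% 4 != 0).

Lemma diff_colour_ends :
  [/\ diff_colour k 0 = 0, diff_colour k 1 = 1, diff_colour k 2 = 1,
      diff_colour k (k - 1) = 2 & diff_colour k (k - 2) = 2].
Proof.
have : k %% 4 = 1 \/ k %% 4 = 2 \/ k %% 4 = 3 by lia.
by case=> [kE|[kE|kE]]; split; rewrite /diff_colour kE /=; repeat case: ifP; lia.
Qed.

Lemma diff_colour_step t : t < k -> diff_colour k t != diff_colour k ((t + 2) %% k).
Proof.
move=> tk; have [c0 c1 _ ck1 ck2] := diff_colour_ends.
have [t2k | kt2] := ltnP (t + 2) k.
  rewrite modn_small // /diff_colour.
  have : k %% 4 = 1 \/ k %% 4 = 2 \/ k %% 4 = 3 by lia.
  by case=> [kE|[kE|kE]]; rewrite kE /=; repeat case: ifP; lia.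
have [tE|tE] : t = k - 1 \/ t = k - 2 by lia.
  by rewrite tE (_ : k - 1 + 2 = 1 + k) ?modnDr ?modn_small ?c1 ?ck1 //; lia.
by rewrite tE (_ : k - 2 + 2 = 0 + k) ?modnDr ?mod0n ?c0 ?ck2 //; lia.
Qed.

End DiffColourTable.

Lemma chi_i_sierp_cycle_le3 k m :
  3 <= k -> k %% 4 != 0 -> chi_i (sierp (cycle_g k) m.+2) <= 3.
Proof.
move=> k3 k4; have [-> | k5] : k = 3 \/ 5 <= k by lia.
  rewrite -[X in _ <= X](card_ord 3).
  by apply: chi_i_sierp_le_card; [exact: cycle_irr | rewrite card_ord].
have [c0 c1 c2 ck1 ck2] := diff_colour_ends k5 k4.
apply: chi_i_le (inj_col_sierp_cdiff k3 (diff_colour_lt3 k) _ _ _ _ _ m).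
- exact: diff_colour_step.
- by rewrite c0 c1.
- by rewrite c0 ck1.
- by rewrite c1 ck2.
- by rewrite ck1 c2.
Qed.

Theorem mainTheorem4 :
  (forall (T : finType) (e : rel T), symmetric e -> irreflexive e ->
     forall n : nat, 0 < n ->
       chi_i e <= chi_i (sierp e n) <= (chi_i e).+1)
  /\ (forall p n : nat, 3 <= p -> 0 < n ->
        chi_i (sierp (complete_g p) n) = chi_i (complete_g p))
  /\ (forall k n : nat, 3 <= k -> k %% 4 != 0 -> 0 < n ->
        chi_i (sierp (cycle_g k) n) = chi_i (cycle_g k))
  /\ (forall k n : nat, 3 <= k -> k %% 4 = 0 -> 2 <= n ->
        chi_i (sierp (cycle_g k) n) = (chi_i (cycle_g k)).+1).
Proof.
split; [|split; [|split]].
- move=> T e e_sym e_irr [|m] // _.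
  by rewrite chi_i_sierp_ge chi_i_sierp_le.
- move=> p [|m] // p3 _; apply/eqP; rewrite eqn_leq chi_i_sierp_ge andbT.
  apply: leq_trans (chi_i_complete_ge p3); rewrite -[X in _ <= X](card_ord p).
  by apply: chi_i_sierp_le_card; rewrite ?card_ord; [move=> i; rewrite /complete_g eqxx | lia].
- move=> k [|[|m]] // k3 k4 _; first by rewrite chi_i_sierp1.
  apply/eqP; rewrite eqn_leq chi_i_sierp_ge andbT.
  exact: leq_trans (chi_i_sierp_cycle_le3 m k3 k4) (chi_i_cycle_ge3 k3 k4).
- move=> k [|[|m]] // k3 k4 _.
  have chi2 : chi_i (cycle_g k) = 2.
    by apply/eqP; rewrite eqn_leq chi_i_cycle_le2 // chi_i_cycle_ge2.
  rewrite chi2; apply/eqP; rewrite eqn_leq chi_i_sierp_cycle_ge3 // andbT.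
  by have := chi_i_sierp_le (@cycle_sym k) (cycle_irr k3) (ltn0Sn m.+1); rewrite chi2.
Qed.
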